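(* Let $N\ge1$ and consider configurations $(S_{j,i},\sigma_i)$ with $S_{j,i}\in\{-1,0,1\}$ for $j\in\mathbb Z_6$, $i\in\mathbb Z_N$, and $\sigma_i\in\{-\tfrac12,\tfrac12\}$ (indices $j$ mod 6, $i$ mod $N$). Let $D\in\mathbb R$ and $$\mathcal H=\sum_{i=1}^N\Bigl[-\sum_{j=1}^{6}\bigl(S_{j,i}S_{j,i+1}+S_{j,i}S_{j+1,i}+S_{j,i}\sigma_i+D\,S_{j,i}^2\bigr)-\sigma_i\sigma_{i+1}\Bigr].$$ Then $\min\mathcal H/N=\min\bigl(-\tfrac{61}{4}-6D,\,-\tfrac14\bigr)$. Moreover, if $D>-\tfrac52$, the minimizers are exactly the two configurations with $S_{j,i}=\tau$, $\sigma_i=\tau/2$ for all $i,j$ ($\tau=\pm1$), with energy $N(-\tfrac{61}{4}-6D)$; if $D<-\tfrac52$, the minimizers are exactly the two configurations with all $S_{j,i}=0$ and all $\sigma_i$ equal, with energy $-N/4$.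
   Context: This is the mixed spin-1/2 (core, $\sigma_i$) and spin-1 (shell, $S_{j,i}$) hexagonal nanowire with couplings $J_1=J_s=J_c=1$ (core–shell, shell–shell, core–core) and single-ion anisotropy $D$, with periodic boundary conditions. The two ground states are called ferromagnetic (FM) and core-ferromagnetic (CFM). *)

From HB Require Import structures.
From mathcomp Require Import all_boot all_order all_algebra.
Set Implicit Arguments. Unset Strict Implicit. Unset Printing Implicit Defensive.
Import Order.TTheory GRing.Theory Num.Theory.
Local Open Scope ring_scope.

(* Shell spins S j i (j : 'I_6 around the hexagon, i : 'I_N along the wire),
   core spins sg i; all real-valued, constrained by [valid_config]. *)
Definition shell_config (R : realFieldType) (N : nat) := 'I_6 -> 'I_N -> R.
Definition core_config (R : realFieldType) (N : nat) := 'I_N -> R.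

Definition valid_config (R : realFieldType) (N : nat)
  (S : shell_config R N) (sg : core_config R N) : Prop :=
  (forall j i, S j i = -1 \/ S j i = 0 \/ S j i = 1) /\
  (forall i, sg i = - (1/2) \/ sg i = 1/2).

(* Hamiltonian with J1 = Js = Jc = 1, periodic indices via ordS (mod 6, mod N). *)
Definition hamiltonian (R : realFieldType) (N : nat) (D : R)
  (S : shell_config R N) (sg : core_config R N) : R :=
  \sum_(i < N)
    ( - (\sum_(j < 6)
           (S j i * S j (ordS i) + S j i * S (ordS j) i
            + S j i * sg i + D * (S j i) ^+ 2))
      - sg i * sg (ordS i)).

From HB Require Import structures.
From mathcomp Require Import all_boot all_order all_algebra.
From mathcomp Require Import ring lra.
Set Implicit Arguments. Unset Strict Implicit. Unset Printing Implicit Defensive.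
Import Order.TTheory GRing.Theory Num.Theory.
Local Open Scope ring_scope.

(** Completing squares on every bond, [- a b = (a - b)^2/2 - (a^2 + b^2)/2], and
    redistributing the [a^2/2] terms to the sites (periodicity makes this exact)
    writes [H] as a sum of independent single-site energies
    [-(2 + D) S^2 - S sigma] (six per ring, plus [-1/4] from [sigma^2 = 1/4])
    and a nonnegative sum of squared bond differences.  Minimizing each site term
    over [S in {-1,0,1}], [sigma = +-1/2] gives [-5/2 - D] (at [S = 2 sigma]) or
    [0] (at [S = 0]) according to the sign of [D + 5/2]; both are realized by
    uniform configurations, where every bond difference vanishes.  Conversely a
    minimizer has minimal site energies and equal neighbouring core spins, and
    the core chain is connected. *)

Definition spin1 (R : realFieldType) (s : R) : Prop := s = -1 \/ s = 0 \/ s = 1.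
Definition spin_half (R : realFieldType) (t : R) : Prop := t = - (1/2) \/ t = 1/2.

Lemma sum_ordS (V : nmodType) (n : nat) (F : 'I_n -> V) :
  \sum_(i < n) F (ordS i) = \sum_(i < n) F i.
Proof. by rewrite [RHS](reindex_inj (@ordS_inj n)). Qed.

Lemma sumr_const_ord (R : pzSemiRingType) (n : nat) (x : R) :
  \sum_(i < n) x = n%:R * x.
Proof. by rewrite sumr_const card_ord mulr_natl. Qed.

Lemma ordS_invariant_const (T : Type) (n : nat) (f : 'I_n -> T) :
  (forall i, f (ordS i) = f i) -> forall i j, f i = f j.
Proof.
case: n f => [f _ [] //|n f fS].
suff f0 : forall k (hk : (k < n.+1)%N), f (Ordinal hk) = f ord0.
  by move=> [i hi] [j hj]; rewrite !f0.
elim=> [|k IHk] hk; first by congr f; apply: val_inj.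
have hk' : (k < n.+1)%N by apply: ltnW.
have -> : Ordinal hk = ordS (Ordinal hk') by apply: val_inj; rewrite /= modn_small.
by rewrite fS IHk.
Qed.

Section Hamiltonian.
Variables (R : realFieldType) (n : nat) (D : R).
Implicit Types (S : shell_config R n) (sg : core_config R n).

Definition site_energy (s t : R) : R := - ((2 + D) * s ^+ 2 + s * t).

Definition bond_mismatch S sg (i : 'I_n) : R :=
  \sum_(j < 6) ((S j i - S j (ordS i)) ^+ 2 / 2 + (S j i - S (ordS j) i) ^+ 2 / 2)
  + (sg i - sg (ordS i)) ^+ 2 / 2.

Lemma bond_mismatch_ge0 S sg i : 0 <= bond_mismatch S sg i.
Proof.
rewrite /bond_mismatch addr_ge0 ?divr_ge0 ?sqr_ge0 //.
by apply: sumr_ge0 => j _; rewrite addr_ge0 ?divr_ge0 ?sqr_ge0.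
Qed.

Lemma bond_mismatch_eq0_core S sg i :
  bond_mismatch S sg i = 0 -> sg (ordS i) = sg i.
Proof.
move/eqP; rewrite /bond_mismatch paddr_eq0 ?divr_ge0 ?sqr_ge0 //; last first.
  by apply: sumr_ge0 => j _; rewrite addr_ge0 ?divr_ge0 ?sqr_ge0.
case/andP=> _; rewrite mulf_eq0 invr_eq0 pnatr_eq0 orbF sqrf_eq0 subr_eq0.
by move/eqP.
Qed.

Lemma hamiltonianE S sg : valid_config S sg ->
  hamiltonian D S sg =
  \sum_(i < n) (\sum_(j < 6) site_energy (S j i) (sg i) - 1/4)
  + \sum_(i < n) bond_mismatch S sg i.
Proof.
move=> [_ sgP].
pose sq i := \sum_(j < 6) S j i ^+ 2.
pose resid i := sq i - sq (ordS i) / 2 - (\sum_(j < 6) S (ordS j) i ^+ 2) / 2.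
have core_bond (a b : R) : spin_half a -> spin_half b -> - (a * b) = (a - b) ^+ 2 / 2 - 1/4.
  by case=> ->; case=> ->; field.
have resid_sum : \sum_(i < n) resid i = 0.
  rewrite (eq_bigr (fun i => (sq i - sq (ordS i)) / 2)) => [|i _]; last first.
    by rewrite /resid (sum_ordS (fun j => S j i ^+ 2)) -/(sq i); field.
  by rewrite -mulr_suml sumrB sum_ordS subrr mul0r.
rewrite -[RHS]addr0 -[X in _ + X]resid_sum -!big_split /=; apply: eq_bigr => i _.
rewrite -addrA [- _ - _]addrC core_bond ?sgP // /bond_mismatch /resid /sq.
by rewrite !big_ord_recr !big_ord0 /site_energy /=; field.
Qed.

Lemma hamiltonian_uniform S sg s t :
  (forall j i, S j i = s) -> (forall i, sg i = t) -> spin_half t ->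
  hamiltonian D S sg = n%:R * (6 * site_energy s t - 1/4).
Proof.
move=> hS hsg ht; rewrite /hamiltonian -sumr_const_ord; apply: eq_bigr => i _.
rewrite !hsg (eq_bigr (fun=> - site_energy s t)).
  by rewrite sumrN sumr_const_ord opprK; case: ht => ->; field.
by move=> j _; rewrite !hS /site_energy; ring.
Qed.

Variable c : R.
Hypothesis site_energy_ge : forall s t, spin1 s -> spin_half t -> c <= site_energy s t.

Lemma hamiltonian_sub_min S sg : valid_config S sg ->
  hamiltonian D S sg - n%:R * (6 * c - 1/4) =
  \sum_(i < n) \sum_(j < 6) (site_energy (S j i) (sg i) - c)
  + \sum_(i < n) bond_mismatch S sg i.
Proof.
move=> v; rewrite hamiltonianE // -sumr_const_ord addrAC -sumrB.
congr (_ + _); apply: eq_bigr => i _.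
by rewrite sumrB sumr_const_ord; ring.
Qed.

Lemma hamiltonian_ge_min S sg : valid_config S sg ->
  n%:R * (6 * c - 1/4) <= hamiltonian D S sg.
Proof.
move=> [SP sgP]; rewrite -subr_ge0 hamiltonian_sub_min //.
rewrite addr_ge0 // sumr_ge0 // => i _; last exact: bond_mismatch_ge0.
by apply: sumr_ge0 => j _; rewrite subr_ge0 site_energy_ge.
Qed.

Lemma hamiltonian_min_inv S sg : valid_config S sg ->
  hamiltonian D S sg = n%:R * (6 * c - 1/4) ->
  (forall i j, site_energy (S j i) (sg i) = c) /\ (forall i, sg (ordS i) = sg i).
Proof.
move=> v Hmin; have [SP sgP] := v.
have excess_ge0 i j : 0 <= site_energy (S j i) (sg i) - c.
  by rewrite subr_ge0 site_energy_ge.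
have /eqP := hamiltonian_sub_min v; rewrite Hmin subrr eq_sym.
rewrite paddr_eq0; first last.
- by apply: sumr_ge0 => i _; exact: bond_mismatch_ge0.
- by apply: sumr_ge0 => i _; exact: sumr_ge0.
case/andP=> /eqP sites0 /eqP bonds0; split=> [i j | i].
  have site_i0 : \sum_(j < 6) (site_energy (S j i) (sg i) - c) = 0.
    by apply: (psumr_eq0P _ sites0) => // k _; apply: sumr_ge0 => l _.
  by apply/eqP; rewrite -subr_eq0; apply/eqP/(psumr_eq0P _ site_i0).
apply/bond_mismatch_eq0_core/(psumr_eq0P _ bonds0) => // k _.
exact: bond_mismatch_ge0.
Qed.

End Hamiltonian.

Section Phases.
Variables (R : realFieldType) (D : R).

Lemma site_energy_fm_ge s t : - (5/2) <= D -> spin1 s -> spin_half t ->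
  - (5/2) - D <= site_energy D s t.
Proof. by rewrite /site_energy => hD [->|[->|->]] [->|->]; lra. Qed.

Lemma site_energy_fm_eq s t : - (5/2) < D -> spin1 s -> spin_half t ->
  site_energy D s t = - (5/2) - D -> s = 2 * t.
Proof. by rewrite /site_energy => hD [->|[->|->]] [->|->]; lra. Qed.

Lemma site_energy_cfm_ge s t : D <= - (5/2) -> spin1 s -> spin_half t ->
  0 <= site_energy D s t.
Proof. by rewrite /site_energy => hD [->|[->|->]] [->|->]; lra. Qed.

Lemma site_energy_cfm_eq s t : D < - (5/2) -> spin1 s -> spin_half t ->
  site_energy D s t = 0 -> s = 0.
Proof. by rewrite /site_energy => hD [->|[->|->]] [->|->]; lra. Qed.

Lemma fm_energyE (n : nat) : n%:R * (6 * (- (5/2) - D) - 1/4) = n%:R * (- (61/4) - 6 * D).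
Proof. by congr (_ * _); field. Qed.

Lemma fm_energy_attained (n : nat) : exists (S : shell_config R n) (sg : core_config R n),
  valid_config S sg /\ hamiltonian D S sg = n%:R * (- (61/4) - 6 * D).
Proof.
exists (fun _ _ => 1), (fun _ => 1/2); split; first by split=> [j i|i]; [right; right | right].
rewrite (hamiltonian_uniform D (s := 1) (t := 1/2)) /site_energy //; last by right.
by congr (_ * _); field.
Qed.

Lemma fm_energy_lower_bound (n : nat) (S : shell_config R n) (sg : core_config R n) :
  - (5/2) <= D -> valid_config S sg -> n%:R * (- (61/4) - 6 * D) <= hamiltonian D S sg.
Proof.
by move=> hD; rewrite -fm_energyE; apply: hamiltonian_ge_min => s t;
  exact: site_energy_fm_ge.
Qed.

Lemma fm_minimizers (n : nat) (S : shell_config R n.+1) (sg : core_config R n.+1) :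
  - (5/2) < D -> valid_config S sg ->
  (hamiltonian D S sg = n.+1%:R * (- (61/4) - 6 * D) <->
   exists tau : R, (tau = 1 \/ tau = -1) /\
     (forall j i, S j i = tau) /\ (forall i, sg i = tau / 2)).
Proof.
move=> hD v; have [SP sgP] := v; rewrite -fm_energyE; split=> [Hmin | [tau [tauP [hS hsg]]]].
- have [site_min sg_periodic] := hamiltonian_min_inv
    (fun s t => site_energy_fm_ge (ltW hD)) v Hmin.
  have sg_const := ordS_invariant_const sg_periodic.
  exists (2 * sg ord0); split; first by case: (sgP ord0) => ->; [right|left]; lra.
  split=> [j i|i]; last by rewrite (sg_const i ord0); field.
  by rewrite -(sg_const i); exact: site_energy_fm_eq hD (SP j i) (sgP i) (site_min i j).
- rewrite (hamiltonian_uniform D hS hsg); last by case: tauP => ->; [right|left]; lra.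
  by congr (_ * (_ - _)); rewrite /site_energy; case: tauP => ->; field.
Qed.

Lemma cfm_energy_attained (n : nat) : exists (S : shell_config R n) (sg : core_config R n),
  valid_config S sg /\ hamiltonian D S sg = n%:R * (- (1/4)).
Proof.
exists (fun _ _ => 0), (fun _ => 1/2); split; first by split=> [j i|i]; [right; left | right].
rewrite (hamiltonian_uniform D (s := 0) (t := 1/2)) /site_energy //; last by right.
by congr (_ * _); field.
Qed.

Lemma cfm_energy_lower_bound (n : nat) (S : shell_config R n) (sg : core_config R n) :
  D <= - (5/2) -> valid_config S sg -> n%:R * (- (1/4)) <= hamiltonian D S sg.
Proof.
move=> hD v; have := hamiltonian_ge_min (fun s t => site_energy_cfm_ge (t := t) hD) v.
by rewrite mulr0 add0r.
Qed.

Lemma cfm_minimizers (n : nat) (S : shell_config R n) (sg : core_config R n) :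
  D < - (5/2) -> valid_config S sg ->
  (hamiltonian D S sg = n%:R * (- (1/4)) <->
   (forall j i, S j i = 0) /\ (forall i i', sg i = sg i')).
Proof.
move=> hD v; have [SP sgP] := v; have -> : - (1/4) = 6 * 0 - 1/4 :> R by ring.
split=> [Hmin | [hS sg_const]].
- have [site_min sg_periodic] := hamiltonian_min_inv
    (fun s t => site_energy_cfm_ge (t := t) (ltW hD)) v Hmin.
  split=> [j i|]; last exact: ordS_invariant_const.
  exact: site_energy_cfm_eq hD (SP j i) (sgP i) (site_min i j).
- case: n S sg v SP sgP hS sg_const => [|n] S sg _ _ sgP hS sg_const.
    by rewrite /hamiltonian big_ord0 mul0r.
  rewrite (hamiltonian_uniform D (t := sg ord0) hS) // /site_energy.
  by congr (_ * (_ - _)); field.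
Qed.

End Phases.

Theorem mainTheorem8 (R : realFieldType) (N : nat) (D : R) (hN : (0 < N)%N) :
  let m := Num.min (- (61 / 4) - 6 * D) (- (1 / 4)) in
  ((exists (S : shell_config R N) (sg : core_config R N),
       valid_config S sg /\ hamiltonian D S sg = N%:R * m) /\
   (forall (S : shell_config R N) (sg : core_config R N),
       valid_config S sg -> N%:R * m <= hamiltonian D S sg)) /\
  (- (5 / 2) < D ->
     (forall (S : shell_config R N) (sg : core_config R N),
        valid_config S sg ->
        (hamiltonian D S sg = N%:R * m <->
         exists tau : R, (tau = 1 \/ tau = -1) /\
           (forall j i, S j i = tau) /\ (forall i, sg i = tau / 2))) /\
     N%:R * m = N%:R * (- (61 / 4) - 6 * D)) /\
  (D < - (5 / 2) ->
     (forall (S : shell_config R N) (sg : core_config R N),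
        valid_config S sg ->
        (hamiltonian D S sg = N%:R * m <->
         (forall j i, S j i = 0) /\ (forall i i', sg i = sg i'))) /\
     N%:R * m = - N%:R / 4).
Proof.
move=> m; case: N hN => [//|n] _.
have [hD|hD] := leP (- (5/2)) D.
- have -> : m = - (61/4) - 6 * D by rewrite /m min_l //; lra.
  split; [split|split].
  + exact: fm_energy_attained.
  + by move=> S sg; apply: fm_energy_lower_bound.
  + by move=> hD'; split=> // S sg; apply: fm_minimizers.
  + by move=> ?; lra.
- have -> : m = - (1/4) by rewrite /m min_r //; lra.
  split; [split|split].
  + exact: cfm_energy_attained.
  + by move=> S sg; apply: cfm_energy_lower_bound; apply: ltW.
  + by move=> ?; lra.
  + by split=> [S sg|]; [apply: cfm_minimizers | lra].
Qed.
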